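(* Let $0<a<1$, $0<b<1$ and $\epsilon>0$, and let $I\in\mathbb{R}$ and $\gamma\ge 0$. Consider the system \begin{align*} \dot y_A &= y_A-\tfrac{y_A^3}{3}-a-z_A+I, & \dot z_A &= \epsilon(y_A-bz_A),\\ \dot y_B &= y_B-\tfrac{y_B^3}{3}-a-z_B+\gamma(y_A-y_B), & \dot z_B &= \epsilon(y_B-bz_B). \end{align*} Then for every fixed $I$ and $\gamma$ the system has a unique equilibrium point $\mathbf{p}_*=(y_{A*},z_{A*},y_{B*},z_{B*})$. Define $$\sigma_1(I,\gamma)=1-b\epsilon-y_{A*}^2,\qquad \sigma_2(I,\gamma)=1-b\epsilon-\gamma-y_{B*}^2.$$ Then: (1) $\mathbf{p}_*$ is nonhyperbolic if $\sigma_1(I,\gamma)=0$ or $\sigma_2(I,\gamma)=0$; (2) $\mathbf{p}_*$ is hyperbolic if $\sigma_1(I,\gamma)\neq 0$ and $\sigma_2(I,\gamma)\neq 0$; in that case $\mathbf{p}_*$ is attracting if $\sigma_1<0$ and $\sigma_2<0$, repelling if $\sigma_1>0$ and $\sigma_2>0$, and a saddle if $\sigma_1\sigma_2<0$.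
   Context: This is the directed (unidirectionally coupled) two-FitzHugh–Nagumo system: neuron $A$ receives external input $I$, neuron $B$ receives no input and is coupled from $A$ with coupling strength $\gamma$. The paper's standing assumption (Assumption 1) is that the parameters are such that a single FitzHugh–Nagumo neuron $\dot y=y-y^3/3-a-z+I$, $\dot z=\epsilon(y-bz)$ has a unique equilibrium for all $I\ge 0$, which the paper states amounts to $0<a<1$ and $0<b<1$; $\epsilon$ is a small positive timescale separation constant. *)

From HB Require Import structures.
From mathcomp Require Import all_boot all_order all_algebra.
From mathcomp Require Import all_classical all_reals all_analysis.
From mathcomp Require Import complex.
Set Implicit Arguments. Unset Strict Implicit. Unset Printing Implicit Defensive.
Import Order.TTheory GRing.Theory Num.Theory.
Local Open Scope ring_scope.

Definition yA {R : realType} (p : 'rV[R]_4) : R := p 0 (inord 0).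
Definition zA {R : realType} (p : 'rV[R]_4) : R := p 0 (inord 1).
Definition yB {R : realType} (p : 'rV[R]_4) : R := p 0 (inord 2).
Definition zB {R : realType} (p : 'rV[R]_4) : R := p 0 (inord 3).

Definition fhn2_vf {R : realType} (a b eps I gam : R) (p : 'rV[R]_4) : 'rV[R]_4 :=
  \row_(i < 4)
    match val i with
    | 0%N => yA p - (yA p) ^+ 3 / 3 - a - zA p + I
    | 1%N => eps * (yA p - b * zA p)
    | 2%N => yB p - (yB p) ^+ 3 / 3 - a - zB p + gam * (yA p - yB p)
    | _ => eps * (yB p - b * zB p)
    end.

Definition jacobian {R : realType} (f : 'rV[R]_4 -> 'rV[R]_4) (p : 'rV[R]_4)
  : 'M[R]_4 :=
  \matrix_(i < 4, j < 4) derive1 (fun t : R => f (p + t *: delta_mx 0 j) 0 i) 0.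

Definition is_eigenvalue {R : realType} (M : 'M[R]_4) (l : R[i]) : Prop :=
  eigenvalue (map_mx (fun x : R => x%:C%C) M) l.

Definition hyperbolic {R : realType} (f : 'rV[R]_4 -> 'rV[R]_4) p : Prop :=
  forall l, is_eigenvalue (jacobian f p) l -> Re l != 0.
Definition nonhyperbolic {R : realType} (f : 'rV[R]_4 -> 'rV[R]_4) p : Prop :=
  exists l, is_eigenvalue (jacobian f p) l /\ Re l = 0.
Definition attracting {R : realType} (f : 'rV[R]_4 -> 'rV[R]_4) p : Prop :=
  forall l, is_eigenvalue (jacobian f p) l -> Re l < 0.
Definition repelling {R : realType} (f : 'rV[R]_4 -> 'rV[R]_4) p : Prop :=
  forall l, is_eigenvalue (jacobian f p) l -> 0 < Re l.
Definition saddle {R : realType} (f : 'rV[R]_4 -> 'rV[R]_4) p : Prop :=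
  hyperbolic f p /\
  (exists l, is_eigenvalue (jacobian f p) l /\ Re l < 0) /\
  (exists l, is_eigenvalue (jacobian f p) l /\ 0 < Re l).

From Pilot Require Import Defs.
From HB Require Import structures.
From mathcomp Require Import all_boot all_order all_algebra.
From mathcomp Require Import all_classical all_reals all_analysis.
From mathcomp Require Import complex.
From mathcomp Require Import ring lra.
Import Order.TTheory GRing.Theory Num.Theory.
Local Open Scope ring_scope.

(* Setting [z = y / b] in the nullclines leaves, for each neuron, a cubic
   [- y^3/3 + m y + c = 0] with [m <= 0]; it is strictly decreasing in [y], so
   it has exactly one root, and solving first for [y_A] and then for [y_B]
   gives the unique equilibrium.  Since neuron [A] does not feel [B], the
   Jacobian is block lower triangular, and its eigenvalues are the roots of the
   characteristic polynomials [l^2 - sigma_k l + Delta_k] of the two diagonal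
   2x2 blocks.  Their constant terms [Delta_k] are positive because [b < 1] and
   [gam >= 0], and a root of [l^2 - T l + D] with [D > 0] has a real part of the
   same sign as [T]: complex roots have real part [T/2], real roots have product
   [D > 0] and sum [T].  So the signs of the real parts of the spectrum are
   exactly the signs of [sigma_1] and [sigma_2]. *)

Lemma det_mx22 (R : comNzRingType) (A : 'M[R]_2) :
  \det A = A 0 0 * A 1 1 - A 0 1 * A 1 0.
Proof.
rewrite (expand_det_row _ 0) !big_ord_recl big_ord0 addr0 /cofactor !det_mx11 !mxE /=.
have liftE (i : 'I_2) (j : 'I_1) : lift i j = if val i == 0%N then 1 else 0.
  by apply/val_inj; case: i j => [[|[|//]] ?] [[|//] ?].
by rewrite !liftE /= expr0 expr1 !mul1r mulN1r mulrN.
Qed.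

Lemma char_poly_mx22 (R : comNzRingType) (A : 'M[R]_2) :
  char_poly A = 'X^2 - (\tr A)%:P * 'X + (\det A)%:P.
Proof.
apply/polyP => -[|[|[|k]]]; rewrite coefD coefB coefXn coefCM coefX coefC /=.
- by rewrite char_poly_det expr2 mulN1r opprK mul1r; ring.
- by rewrite (char_poly_trace A) //; ring.
- by have /monicP <- := char_poly_monic A; rewrite lead_coefE size_char_poly; ring.
- by rewrite nth_default ?size_char_poly //; ring.
Qed.

Lemma eigenvalue_mx22 (F : fieldType) (A : 'M[F]_2) a :
  eigenvalue A a = (a ^+ 2 - \tr A * a + \det A == 0).
Proof. by rewrite eigenvalue_root_char char_poly_mx22 rootE !hornerE. Qed.

Lemma char_poly_lblock (R : comNzRingType) m n (A : 'M[R]_m) (C : 'M[R]_(n, m))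
    (B : 'M[R]_n) :
  char_poly (block_mx A 0 C B) = char_poly A * char_poly B.
Proof.
rewrite /char_poly /char_poly_mx map_block_mx map_mx0 scalar_mx_block.
by rewrite opp_block_mx add_block_mx oppr0 addr0 det_lblock.
Qed.

Lemma eigenvalue_lblock (F : fieldType) m n (A : 'M[F]_m) (C : 'M[F]_(n, m))
    (B : 'M[F]_n) a :
  eigenvalue (block_mx A 0 C B) a = eigenvalue A a || eigenvalue B a.
Proof. by rewrite !eigenvalue_root_char char_poly_lblock rootM. Qed.

Lemma exists_eigenvalue (C : closedFieldType) n (A : 'M[C]_n.+1) :
  exists a, eigenvalue A a.
Proof.
have /closed_rootP [a root_a] : size (char_poly A) != 1%N by rewrite size_char_poly.
by exists a; rewrite eigenvalue_root_char.
Qed.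

Section ComplexRoots.
Variable R : rcfType.
Local Open Scope complex_scope.

Lemma sgr_eq_of_mul_gt0 (x y : R) : 0 < x * y -> Num.sg x = Num.sg y.
Proof.
move=> xy_gt0; have [x0|x0|x0] := ltgtP x 0.
- by rewrite !ltr0_sg // -(nmulr_rgt0 y x0).
- by rewrite !gtr0_sg // -(pmulr_rgt0 y x0).
- by rewrite x0 mul0r ltxx in xy_gt0.
Qed.

Lemma sgr_Re_root_quadratic (T D : R) (l : R[i]) : 0 < D ->
  l ^+ 2 - T%:C * l + D%:C = 0 -> Num.sg (complex.Re l) = Num.sg T.
Proof.
case: l => x y /= D_gt0; rewrite expr2.
move=> /(congr1 (fun z => (complex.Re z, complex.Im z))); simpc => -[Re0 Im0].
have : y * (2 * x - T) = 0 by rewrite -[RHS]Im0; ring.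
move/eqP; rewrite mulf_eq0 => /orP[/eqP y0|/eqP/subr0_eq <-].
  by apply: sgr_eq_of_mul_gt0; subst y; nra.
by rewrite sgrM (gtr0_sg (_ : 0 < 2)) ?mul1r.
Qed.

Lemma sgr_Re_eigenvalue_mx22 (A : 'M[R]_2) (l : R[i]) : 0 < \det A ->
  eigenvalue (map_mx (real_complex R) A) l ->
  Num.sg (complex.Re l) = Num.sg (\tr A).
Proof.
move=> det_gt0; rewrite eigenvalue_mx22 trace_map_mx det_map_mx => /eqP.
exact: sgr_Re_root_quadratic.
Qed.

(* The spectral predicates of [Defs] use the real part ['Re] of a
   numClosedFieldType, which lives in [R[i]]; compare it with [complex.Re]. *)
Lemma ReC_eq0 (l : R[i]) : ('Re l == 0) = (complex.Re l == 0).
Proof. by rewrite -complexRe eq_complex /= eqxx andbT. Qed.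

Lemma ReC_lt0 (l : R[i]) : ('Re l < 0) = (complex.Re l < 0).
Proof. by rewrite -complexRe; exact: (ltcR (complex.Re l) 0). Qed.

Lemma ReC_gt0 (l : R[i]) : (0 < 'Re l) = (0 < complex.Re l).
Proof. by rewrite -complexRe; exact: (ltcR 0 (complex.Re l)). Qed.

Lemma Re_sign_transfer (l : R[i]) (s : R) : Num.sg (complex.Re l) = Num.sg s ->
  [/\ ('Re l == 0) = (s == 0), ('Re l < 0) = (s < 0) & (0 < 'Re l) = (0 < s)].
Proof.
move=> sg_eq; rewrite ReC_eq0 ReC_lt0 ReC_gt0.
by rewrite -sgr_eq0 -sgr_lt0 -sgr_gt0 sg_eq sgr_eq0 sgr_lt0 sgr_gt0.
Qed.

End ComplexRoots.

Lemma exists_unique_depressed_cubic (R : rcfType) (m c : R) : m <= 0 ->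
  exists! y : R, - y ^+ 3 / 3 + m * y + c = 0.
Proof.
move=> m_le0.
pose P : {poly R} := 3^-1 *: 'X^3 - m *: 'X - c%:P.
have PE y : P.[y] = - (- y ^+ 3 / 3 + m * y + c).
  by rewrite /P !(hornerD, hornerN, hornerZ, hornerXn, hornerX, hornerC); ring.
(* [P.[M] >= M^3/3 - c > 0] and [P.[-M] < 0], since [M^3 >= M > 3 |c|]. *)
pose M := 1 + 3 * `|c|.
have M_ge1 : 1 <= M by rewrite /M; have := normr_ge0 c; lra.
have M_le_cube : M <= M ^+ 3 by rewrite !exprS expr0 mulr1; nra.
have [y _ /rootP Py] : exists2 y, - M <= y <= M & root P y.
  apply: poly_ivt; first lra.
  have : - `|c| <= c <= `|c| by rewrite -ler_norml.
  have : m * M <= 0 by nra.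
  rewrite !PE (_ : (- M) ^+ 3 = - M ^+ 3); last by ring.
  rewrite /M in M_le_cube *; lra.
have /eqP : - (- y ^+ 3 / 3 + m * y + c) = 0 by rewrite -PE.
rewrite oppr_eq0 => /eqP root_y; exists y; split => // z root_z.
have : (y - z) * (y ^+ 2 + y * z + z ^+ 2 - 3 * m) =
       3 * ((- z ^+ 3 / 3 + m * z + c) - (- y ^+ 3 / 3 + m * y + c)) by field.
rewrite root_y root_z subrr mulr0 => /eqP; rewrite mulf_eq0.
case/orP => [/eqP/subr0_eq // | /eqP Q0].
have := sqr_ge0 (y + z); have := sqr_ge0 y; have := sqr_ge0 z; nra.
Qed.

Section FitzHughNagumo.
Variable R : realType.

Definition row4 (x0 x1 x2 x3 : R) : 'rV[R]_4 :=
  \row_(i < 4) nth 0 [:: x0; x1; x2; x3] i.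

Lemma row4_coordK (p : 'rV[R]_4) : row4 (yA p) (zA p) (yB p) (zB p) = p.
Proof.
apply/rowP => i; rewrite mxE /yA /zA /yB /zB.
by case: i => [[|[|[|[|//]]]] ?] /=; congr (p 0 _); apply/val_inj; rewrite /= inordK.
Qed.

Lemma row4E (x0 x1 x2 x3 : R) :
  [/\ yA (row4 x0 x1 x2 x3) = x0, zA (row4 x0 x1 x2 x3) = x1,
      yB (row4 x0 x1 x2 x3) = x2 & zB (row4 x0 x1 x2 x3) = x3].
Proof. by rewrite /yA /zA /yB /zB !mxE !inordK. Qed.

Lemma row4_eq0 (x0 x1 x2 x3 : R) :
  row4 x0 x1 x2 x3 = 0 <-> [/\ x0 = 0, x1 = 0, x2 = 0 & x3 = 0].
Proof.
split => [x_eq0 | [-> -> -> ->]].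
  by have := row4E x0 x1 x2 x3; rewrite x_eq0 /yA /zA /yB /zB !mxE => -[<- <- <- <-].
by apply/rowP => -[[|[|[|[|//]]]] ?]; rewrite !mxE.
Qed.

Lemma fhn2_vfE (a b eps I gam : R) (p : 'rV[R]_4) :
  fhn2_vf a b eps I gam p =
  row4 (yA p - yA p ^+ 3 / 3 - a - zA p + I) (eps * (yA p - b * zA p))
       (yB p - yB p ^+ 3 / 3 - a - zB p + gam * (yA p - yB p))
       (eps * (yB p - b * zB p)).
Proof. by apply/rowP => -[[|[|[|[|//]]]] ?]; rewrite !mxE. Qed.

Lemma fhn2_equilibriumE (a b eps I gam : R) (p : 'rV[R]_4) :
  b != 0 -> eps != 0 ->
  fhn2_vf a b eps I gam p = 0 <->
  [/\ zA p = yA p / b, zB p = yB p / b,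
      - yA p ^+ 3 / 3 + (1 - b^-1) * yA p + (I - a) = 0 &
      - yB p ^+ 3 / 3 + (1 - b^-1 - gam) * yB p + (gam * yA p - a) = 0].
Proof.
move=> b_neq0 eps_neq0; rewrite fhn2_vfE row4_eq0.
have slowE y z : eps * (y - b * z) = 0 <-> z = y / b.
  split => [/eqP | ->]; last by field.
  by rewrite mulf_eq0 (negbTE eps_neq0) subr_eq0 => /eqP ->; field.
split => [[fastA /slowE zAE fastB /slowE zBE] | [zAE zBE fastA fastB]].
  by split => //; [rewrite -[RHS]fastA zAE | rewrite -[RHS]fastB zBE]; field.
split; try exact/slowE.
  by rewrite -[RHS]fastA zAE; field.
by rewrite -[RHS]fastB zBE; field.
Qed.

Lemma fhn2_unique_equilibrium (a b eps I gam : R) :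
  0 < b <= 1 -> eps != 0 -> 0 <= gam ->
  exists! p : 'rV[R]_4, fhn2_vf a b eps I gam p = 0.
Proof.
move=> /andP[b_gt0 b_le1] eps_neq0 gam_ge0.
have b_neq0 : b != 0 by rewrite gt_eqF.
have m_le0 : 1 - b^-1 <= 0 by rewrite subr_le0 invf_ge1.
have mB_le0 : 1 - b^-1 - gam <= 0 by lra.
have [yA0 [rootA uniqA]] := @exists_unique_depressed_cubic R _ (I - a) m_le0.
have [yB0 [rootB uniqB]] := @exists_unique_depressed_cubic R _ (gam * yA0 - a) mB_le0.
have equilibriumE p := fhn2_equilibriumE a b eps I gam p b_neq0 eps_neq0.
exists (row4 yA0 (yA0 / b) yB0 (yB0 / b)); split.
  by apply/equilibriumE; have [-> -> -> ->] := row4E yA0 (yA0 / b) yB0 (yB0 / b).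
move=> q /equilibriumE[zAE zBE qA qB].
have yAE := uniqA _ qA; rewrite -yAE in qB; have yBE := uniqB _ qB.
by rewrite -[q]row4_coordK zAE zBE -yAE -yBE.
Qed.

Lemma derive1_cubic0 (c0 c1 c2 c3 : R) :
  derive1 (fun t => c0 + c1 * t + c2 * t ^+ 2 + c3 * t ^+ 3) 0 = c1.
Proof.
pose P : {poly R} := c0%:P + c1 *: 'X + c2 *: 'X^2 + c3 *: 'X^3.
have -> : (fun t => c0 + c1 * t + c2 * t ^+ 2 + c3 * t ^+ 3) = horner P.
  by apply: funext => t; rewrite /P !hornerE.
by rewrite derive1E derive_val /P !poly.derivE !hornerE /=; ring.
Qed.

Lemma derive1_fhn_fast (y dy z dz h dh : R) :
  derive1 (fun t => (y + t * dy) - (y + t * dy) ^+ 3 / 3 - (z + t * dz) + (h + t * dh)) 0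
  = (1 - y ^+ 2) * dy - dz + dh.
Proof.
rewrite -[RHS](derive1_cubic0 (y - y ^+ 3 / 3 - z + h) _ (- y * dy ^+ 2) (- dy ^+ 3 / 3)).
by congr (derive1 _ 0); apply: funext => t; field.
Qed.

Lemma derive1_fhn_slow (eps b y dy z dz : R) :
  derive1 (fun t => eps * ((y + t * dy) - b * (z + t * dz))) 0 = eps * (dy - b * dz).
Proof.
rewrite -[RHS](derive1_cubic0 (eps * (y - b * z)) _ 0 0).
by congr (derive1 _ 0); apply: funext => t; ring.
Qed.

Definition fhn2_differential (b eps gam : R) (p v : 'rV[R]_4) : 'rV[R]_4 :=
  row4 ((1 - yA p ^+ 2) * yA v - zA v) (eps * (yA v - b * zA v))
       ((1 - yB p ^+ 2) * yB v - zB v + gam * (yA v - yB v))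
       (eps * (yB v - b * zB v)).

Lemma derive1_fhn2_vf_line (a b eps I gam : R) (p v : 'rV[R]_4) (i : 'I_4) :
  derive1 (fun t => fhn2_vf a b eps I gam (p + t *: v) 0 i) 0 =
  fhn2_differential b eps gam p v 0 i.
Proof.
rewrite mxE; case: i => [[|[|[|[|//]]]] Hi] /=.
- rewrite -[RHS]addr0 -(derive1_fhn_fast (yA p) (yA v) (zA p) (zA v) (I - a)).
  by congr (derive1 _ 0); apply: funext => t; rewrite mxE /yA /zA !mxE /=; ring.
- rewrite -(derive1_fhn_slow eps b (yA p) _ (zA p)); congr (derive1 _ 0).
  by apply: funext => t; rewrite mxE /yA /zA !mxE.
- rewrite -(derive1_fhn_fast (yB p) (yB v) (zB p) (zB v) (gam * (yA p - yB p) - a)).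
  by congr (derive1 _ 0); apply: funext => t; rewrite mxE /yA /zA /yB /zB !mxE /=; ring.
- rewrite -(derive1_fhn_slow eps b (yB p) _ (zB p)); congr (derive1 _ 0).
  by apply: funext => t; rewrite mxE /yB /zB !mxE.
Qed.

Definition fhn_jacobian (b eps c : R) : 'M[R]_2 :=
  \matrix_(i, j) if i == 0 then (if j == 0 then c else -1)
                 else (if j == 0 then eps else - (eps * b)).

Lemma tr_fhn_jacobian (b eps c : R) : \tr (fhn_jacobian b eps c) = c - eps * b.
Proof. by rewrite /mxtrace !big_ord_recl big_ord0 !mxE /=; ring. Qed.

Lemma det_fhn_jacobian (b eps c : R) : \det (fhn_jacobian b eps c) = eps * (1 - b * c).
Proof. by rewrite det_mx22 !mxE /=; ring. Qed.

Definition fhn2_jacobian (b eps gam : R) (p : 'rV[R]_4) : 'M[R]_(2 + 2) :=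
  block_mx (fhn_jacobian b eps (1 - yA p ^+ 2)) 0
           (gam *: delta_mx 0 0) (fhn_jacobian b eps (1 - gam - yB p ^+ 2)).

Lemma jacobian_fhn2 (a b eps I gam : R) (p : 'rV[R]_4) :
  Defs.jacobian (fhn2_vf a b eps I gam) p = fhn2_jacobian b eps gam p.
Proof.
apply/matrixP => i j; rewrite /Defs.jacobian mxE derive1_fhn2_vf_line mxE.
have unitE k : (k < 4)%N -> (delta_mx 0 j : 'rV[R]_4) 0 (inord k) = (k == val j)%:R.
  by move=> k4; rewrite mxE eqxx -val_eqE /= inordK.
rewrite /yA /zA /yB /zB !unitE // /fhn2_jacobian [RHS]mxE.
case: splitP => i' Ei; rewrite !mxE; case: splitP => j' Ej; rewrite !mxE /= Ei Ej;
  by case: i' {Ei} => [[|[|//]] ?]; case: j' {Ej} => [[|[|//]] ?]; rewrite /yA /yB /=; ring.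
Qed.

Lemma fhn_jacobian_spectrum (b eps c : R) : 0 < eps -> b * c < 1 ->
  (forall l, eigenvalue (map_mx (real_complex R) (fhn_jacobian b eps c)) l ->
     Num.sg (complex.Re l) = Num.sg (c - eps * b)) /\
  exists l, eigenvalue (map_mx (real_complex R) (fhn_jacobian b eps c)) l.
Proof.
move=> eps_gt0 bc_lt1; split; last exact: exists_eigenvalue.
move=> l /sgr_Re_eigenvalue_mx22; rewrite tr_fhn_jacobian; apply.
by rewrite det_fhn_jacobian mulr_gt0 // subr_gt0.
Qed.

Lemma is_eigenvalue_fhn2 (a b eps I gam : R) (p : 'rV[R]_4) (l : R[i]) :
  is_eigenvalue (Defs.jacobian (fhn2_vf a b eps I gam) p) l <->
  eigenvalue (map_mx (real_complex R) (fhn_jacobian b eps (1 - yA p ^+ 2))) l \/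
  eigenvalue (map_mx (real_complex R) (fhn_jacobian b eps (1 - gam - yB p ^+ 2))) l.
Proof.
rewrite /is_eigenvalue jacobian_fhn2.
rewrite /fhn2_jacobian (@map_block_mx _ _ _ 2 2 2 2) map_mx0 (@eigenvalue_lblock _ 2 2).
by split => /orP.
Qed.

Lemma fhn2_eigenvalue_signs (a b eps I gam : R) (p : 'rV[R]_4) :
  0 <= b < 1 -> 0 < eps -> 0 <= gam ->
  let J := Defs.jacobian (fhn2_vf a b eps I gam) p in
  let sigma1 := 1 - b * eps - yA p ^+ 2 in
  let sigma2 := 1 - b * eps - gam - yB p ^+ 2 in
  [/\ forall l, is_eigenvalue J l ->
        Num.sg (complex.Re l) = Num.sg sigma1 \/ Num.sg (complex.Re l) = Num.sg sigma2,
      exists2 l, is_eigenvalue J l & Num.sg (complex.Re l) = Num.sg sigma1 &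
      exists2 l, is_eigenvalue J l & Num.sg (complex.Re l) = Num.sg sigma2].
Proof.
move=> /andP[b_ge0 b_lt1] eps_gt0 gam_ge0 J sigma1 sigma2.
have bcA_lt1 : b * (1 - yA p ^+ 2) < 1 by have := sqr_ge0 (yA p); nra.
have bcB_lt1 : b * (1 - gam - yB p ^+ 2) < 1 by have := sqr_ge0 (yB p); nra.
have [sgA [lA eigA]] := fhn_jacobian_spectrum _ _ _ eps_gt0 bcA_lt1.
have [sgB [lB eigB]] := fhn_jacobian_spectrum _ _ _ eps_gt0 bcB_lt1.
have sigma1E : 1 - yA p ^+ 2 - eps * b = sigma1 by rewrite /sigma1; ring.
have sigma2E : 1 - gam - yB p ^+ 2 - eps * b = sigma2 by rewrite /sigma2; ring.
rewrite -sigma1E -sigma2E; split.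
- by move=> l /is_eigenvalue_fhn2 [/sgA | /sgB]; [left | right].
- by exists lA; [apply/is_eigenvalue_fhn2; left | exact: sgA].
- by exists lB; [apply/is_eigenvalue_fhn2; right | exact: sgB].
Qed.

End FitzHughNagumo.

Theorem proposition3 (R : realType) (a b eps I gam : R) :
  0 < a < 1 -> 0 < b < 1 -> 0 < eps -> 0 <= gam ->
  (exists! p : 'rV[R]_4, fhn2_vf a b eps I gam p = 0) /\
  (forall p : 'rV[R]_4, fhn2_vf a b eps I gam p = 0 ->
     let sigma1 := 1 - b * eps - (yA p) ^+ 2 in
     let sigma2 := 1 - b * eps - gam - (yB p) ^+ 2 in
     ((sigma1 = 0 \/ sigma2 = 0) -> nonhyperbolic (fhn2_vf a b eps I gam) p) /\
     (sigma1 != 0 -> sigma2 != 0 ->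
        hyperbolic (fhn2_vf a b eps I gam) p /\
        (sigma1 < 0 -> sigma2 < 0 -> attracting (fhn2_vf a b eps I gam) p) /\
        (0 < sigma1 -> 0 < sigma2 -> repelling (fhn2_vf a b eps I gam) p) /\
        (sigma1 * sigma2 < 0 -> saddle (fhn2_vf a b eps I gam) p))).
Proof.
move=> _ /andP[b_gt0 b_lt1] eps_gt0 gam_ge0; split.
  by apply: fhn2_unique_equilibrium; rewrite ?b_gt0 ?(ltW b_lt1) ?gt_eqF.
move=> p _ sigma1 sigma2.
have b_range : 0 <= b < 1 by rewrite ltW.
have [sg_eig [l1 eig1 /Re_sign_transfer [Re1_eq0 Re1_lt0 Re1_gt0]]
              [l2 eig2 /Re_sign_transfer [Re2_eq0 Re2_lt0 Re2_gt0]]] :=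
  @fhn2_eigenvalue_signs R a b eps I gam p b_range eps_gt0 gam_ge0.
split.
  by case=> /eqP s_eq0; [exists l1 | exists l2]; split => //; apply/eqP;
    rewrite ?Re1_eq0 ?Re2_eq0.
move=> s1_neq0 s2_neq0.
have hyp : hyperbolic (fhn2_vf a b eps I gam) p.
  by move=> l /sg_eig [] /Re_sign_transfer [-> _ _].
split=> //; split; last split.
- by move=> s1_lt0 s2_lt0 l /sg_eig [] /Re_sign_transfer [_ -> _].
- by move=> s1_gt0 s2_gt0 l /sg_eig [] /Re_sign_transfer [_ _ ->].
move=> s12_lt0; split=> //.
have [s1_lt0 | s1_ge0] := ltP sigma1 0.
  have s2_gt0 : 0 < sigma2 by nra.
  by split; [exists l1 | exists l2]; rewrite ?Re1_lt0 ?Re2_gt0.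
have s2_lt0 : sigma2 < 0 by nra.
have s1_gt0 : 0 < sigma1 by rewrite lt_neqAle eq_sym s1_neq0.
by split; [exists l2 | exists l1]; rewrite ?Re2_lt0 ?Re1_gt0.
Qed.
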